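(* Let $n\ge 2$ be an integer. Then $$\binom{n^3-\lfloor\frac{(n-1)^3+1}{2}\rfloor}{3n^2-3n+1}+\binom{n^3-\lfloor\frac{(n-1)^3+2}{2}\rfloor}{3n^2-3n+1}< \frac{1}{n^3}\binom{n^3+6n^2-6n+2}{n^3-1}.$$ *)

From mathcomp Require Import all_boot all_order all_algebra.

(* Write N = n^3 and k = 3n^2 - 3n + 1.  Both binomials on the
   left are at most C(N, k), while the right-hand binomial equals
   C(N + 2k, 2k + 1) >= C(N, k) C(2k, k + 1) by Vandermonde's identity.  So it
   suffices that 2N < C(2k, k + 1), which holds because already
   C(k + 1, 2) = k(k + 1)/2 exceeds 2N = 2n^3. *)

From mathcomp Require Import all_boot all_order all_algebra.
From mathcomp Require Import zify.
Import Order.TTheory GRing.Theory Num.Theory.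

Lemma leq_mul_bin a b i j : 'C(a, i) * 'C(b, j) <= 'C(a + b, i + j).
Proof.
rewrite -binomial.Vandermonde.
have lt_i : i < (i + j).+1 by rewrite ltnS leq_addr.
by rewrite (bigD1 (Ordinal lt_i)) //= addKn leq_addr.
Qed.

Lemma bin2_mul2 m : 'C(m, 2) * 2 = m * m.-1.
Proof. by rewrite bin_ffact ffactnS ffactn1. Qed.

Lemma leq_bin2_bin_double k : 0 < k -> 'C(k.+1, 2) <= 'C(k.*2, k.+1).
Proof.
move=> k_gt0.
have := leq_mul_bin k.+1 k.-1 2 k.-1.
have -> : k.+1 + k.-1 = k.*2 by lia.
have -> : 2 + k.-1 = k.+1 by lia.
by rewrite binn muln1.
Qed.

Lemma bin_sum_lt_mul N k p q : 0 < k <= N -> N.*2 < 'C(k.*2, k.+1) ->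
  N * ('C(N - p, k) + 'C(N - q, k)) < 'C(N + k.*2, N - 1).
Proof.
case/andP=> k_gt0 le_kN lt_N_bin.
have -> : N - 1 = N + k.*2 - (k.*2).+1 by lia.
rewrite bin_sub; last by lia.
have le_bin_sub r : 'C(N - r, k) <= 'C(N, k) by apply/leq_bin2l/leq_subr.
apply: (@leq_ltn_trans (N.*2 * 'C(N, k))).
  by rewrite -mul2n -mulnA mulnCA leq_mul2l mul2n -addnn leq_add ?orbT.
apply: (@leq_trans ('C(k.*2, k.+1) * 'C(N, k))).
  by rewrite ltn_pmul2r ?bin_gt0.
by rewrite mulnC -addnn -addnS leq_mul_bin.
Qed.

Lemma double_lt_bin_double N k : N.*2.*2 < k.+1 * k -> N.*2 < 'C(k.*2, k.+1).
Proof.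
move=> lt_N_k; have k_gt0 : 0 < k by case: k lt_N_k.
apply: (@leq_trans 'C(k.+1, 2)); last exact: leq_bin2_bin_double.
by rewrite -(ltn_pmul2r (isT : 0 < 2)) bin2_mul2 !muln2.
Qed.

Theorem proposition3 (n : nat) (hn : (2 <= n)%N) :
  ((('C(n ^ 3 - ((n - 1) ^ 3 + 1) %/ 2, 3 * n ^ 2 - 3 * n + 1)
    + 'C(n ^ 3 - ((n - 1) ^ 3 + 2) %/ 2, 3 * n ^ 2 - 3 * n + 1))%N%:R : rat)
  < ((n ^ 3)%N%:R)^-1 * ('C(n ^ 3 + 6 * n ^ 2 - 6 * n + 2, n ^ 3 - 1))%N%:R)%R.
Proof.
have N_gt0 : (0 < (n ^ 3)%N%:R :> rat)%R by rewrite ltr0n expn_gt0; case: n hn.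
rewrite ltr_pdivlMl // -natrM ltr_nat.
set k := 3 * n ^ 2 - 3 * n + 1.
have -> : n ^ 3 + 6 * n ^ 2 - 6 * n + 2 = n ^ 3 + k.*2 by rewrite /k; nia.
apply: bin_sum_lt_mul; last apply: double_lt_bin_double.
  by apply/andP; split; rewrite /k; nia.
by rewrite /k; nia.
Qed.
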